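(* Let $m,k,n\ge 1$ be integers; let $\lambda_i,\mu_i>0$ for $i\in\{1,\dots,k\}$ and $\alpha_j,\beta_j,u_j,v_j>0$ for $j\in\{1,\dots,n\}$; and let $\theta:\{0,\dots,m\}\to\mathbb{R}$ satisfy $0\le\theta(b)\le 1$ for all $b$, $\theta(b)>0$ for $b\in\{0,\dots,m-1\}$, and $\theta(m)=0$. Let $\mathcal{S}$ be the set of vectors $w=(x;a)=(x_1,\dots,x_k;a_1,\dots,a_n)$ with $x_i\in\mathbb{Z}_{\ge0}$, $a_j\in\{I,W,T\}$, and $\mathrm{busy}(w):=\sum_{i=1}^k x_i+\sum_{j=1}^n 1_{\{a_j=T\}}\le m$. Consider the CTMC on $\mathcal{S}$ whose only nonzero transition rates between states in $\mathcal{S}$ are: (i) $(x;a)\to(x+e_i;a)$ with rate $\lambda_i\theta(\mathrm{busy}(x;a))$ and $(x+e_i;a)\to(x;a)$ with rate $(x_i+1)\mu_i$, for each $i\in\{1,\dots,k\}$ ($e_i$ the $i$-th unit vector of length $k$); (ii) for each $j\in\{1,\dots,n\}$, changing only coordinate $a_j$: $I\to W$ with rate $\alpha_j$, $W\to I$ with rate $\beta_j$, $W\to T$ with rate $u_j\theta(\mathrm{busy}(w))$ where $w$ is the state before the transition, and $T\to W$ with rate $v_j$. Let $\rho_i=\lambda_i/\mu_i$. Then this CTMC is reversible and its steady state distribution is $$p(w)=B\cdot\Big(\prod_{r=0}^{\mathrm{busy}(w)-1}\theta(r)\Big)\Big(\prod_{i=1}^k\frac{\rho_i^{x_i}}{x_i!}\Big)\prod_{j=1}^n\Big(\frac{\alpha_j}{\beta_j}\Big)^{1_{\{a_j=W\}}}\Big(\frac{\alpha_ju_j}{\beta_jv_j}\Big)^{1_{\{a_j=T\}}}\qquad\forall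 w\in\mathcal{S},$$ where $B$ is the constant making the probabilities sum to $1$ and $\prod_{r=0}^{-1}\theta(r)=1$.
   Context: This models an access point with $m$ channels, $k$ classes of non-persistent users ($x_i$ = number of class $i$ users transmitting) and $n$ persistent users, each in activity state Idle ($I$), Waiting ($W$) or Transmitting ($T$); an access attempt made when $b$ channels are busy succeeds with probability $\theta(b)$. A CTMC is reversible if there is a probability mass function $p$ with $p(w)q_{w,z}=p(z)q_{z,w}$ for all states $w,z$. *)

From HB Require Import structures.
From mathcomp Require Import all_boot all_order all_algebra.
Set Implicit Arguments. Unset Strict Implicit. Unset Printing Implicit Defensive.
Import Order.TTheory GRing.Theory Num.Theory.
Local Open Scope ring_scope.

Inductive act := Idle | Wait | Trans.

Definition act_to_nat (a : act) : nat :=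
  match a with Idle => 0 | Wait => 1 | Trans => 2 end.
Definition nat_to_act (n : nat) : option act :=
  match n with 0 => Some Idle | 1 => Some Wait | 2 => Some Trans | _ => None end.
Lemma act_pcan : pcancel act_to_nat nat_to_act. Proof. by case. Qed.

HB.instance Definition _ := Equality.copy act (pcan_type act_pcan).
HB.instance Definition _ := Choice.copy act (pcan_type act_pcan).
HB.instance Definition _ := Countable.copy act (pcan_type act_pcan).
Definition act_enum := [:: Idle; Wait; Trans].
Lemma act_enumP : Finite.axiom act_enum. Proof. by case. Qed.
HB.instance Definition _ := isFinite.Build act act_enumP.

(* Since every state of S has busy(w) <= m, each
   x_i <= m, so we may take x_i in 'I_(m.+1) without losing any state of S;
   the state space S itself is carved out by the predicate [inS]. *)
Definition state (m k n : nat) :=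
  ({ffun 'I_k -> 'I_m.+1} * {ffun 'I_n -> act})%type.

Section Model.
Variables (m k n : nat).
Local Notation state := (state m k n).

Definition busy (w : state) : nat :=
  (\sum_(i < k) (w.1 i : nat) + \sum_(j < n) (w.2 j == Trans))%N.

Definition inS (w : state) : bool := (busy w <= m)%N.

Variable R : realFieldType.
Variables (theta : nat -> R) (lambda mu : 'I_k -> R) (alpha beta u v : 'I_n -> R).

Definition arrival (i : 'I_k) (w z : state) : bool :=
  [forall l, (z.1 l : nat) == (w.1 l + (l == i))%N] && (z.2 == w.2).

Definition act_rate (j : 'I_n) (w : state) (b c : act) : R :=
  match b, c with
  | Idle, Wait => alpha j
  | Wait, Idle => beta j
  | Wait, Trans => u j * theta (busy w)
  | Trans, Wait => v j
  | _, _ => 0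
  end.

Definition act_move (j : 'I_n) (w z : state) : bool :=
  (z.1 == w.1) && [forall l, (l != j) ==> (z.2 l == w.2 l)].

Definition rate (w z : state) : R :=
  \sum_(i < k) ((if arrival i w z then lambda i * theta (busy w) else 0)
              + (if arrival i z w then (w.1 i : nat)%:R * mu i else 0))
  + \sum_(j < n) (if act_move j w z then act_rate j w (w.2 j) (z.2 j) else 0).

Definition is_pmf (p : state -> R) : Prop :=
  (forall w, inS w -> 0 <= p w) /\ \sum_(w | inS w) p w = 1.

Definition reversible : Prop :=
  exists p : state -> R, is_pmf p /\
    forall w z, inS w -> inS z -> p w * rate w z = p z * rate z w.

Definition stationary (p : state -> R) : Prop :=
  is_pmf p /\
  forall w, inS w ->
    p w * (\sum_(z | inS z && (z != w)) rate w z)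
    = \sum_(z | inS z && (z != w)) p z * rate z w.

Definition weight (w : state) : R :=
  (\prod_(r < busy w) theta r)
  * (\prod_(i < k) ((lambda i / mu i) ^+ (w.1 i) / ((w.1 i)`!)%:R))
  * (\prod_(j < n) ((if w.2 j == Wait then alpha j / beta j else 1)
                   * (if w.2 j == Trans then (alpha j * u j) / (beta j * v j) else 1))).

Definition normconst : R := (\sum_(w | inS w) weight w)^-1.

End Model.

From mathcomp Require Import all_boot all_order all_algebra.
From mathcomp Require Import ring zify.
Set Implicit Arguments. Unset Strict Implicit. Unset Printing Implicit Defensive.
Import Order.TTheory GRing.Theory Num.Theory.
Local Open Scope ring_scope.

(* The product-form weight g satisfies detailed balance g(w) q(w,z) = g(z) q(z,w):
   for an arrival of class i this is rho^(x+1)/(x+1)! * (x+1) mu = rho^x/x! * lambda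
   together with the extra factor theta(busy) of the prefix product, and for a change
   of a_j it is a check on one coordinate.  Normalising g therefore gives a reversible,
   hence stationary, distribution.  Conversely, if p is stationary then h = p/g has
   sum_z g(w) q(w,z) (h(w) - h(z)) = 0 at every w, so the Dirichlet form
   sum_(w,z) g(w) q(w,z) (h(w) - h(z))^2 vanishes and h is constant along transitions
   of positive rate.  Departures and the steps T -> W -> I have positive rate and lead
   from every state to the empty one, so h is constant and p is proportional to g. *)

Lemma eq_big_but1 (T : Type) (idx : T) (op : Monoid.com_law idx) (I : finType)
    (i : I) (f g : I -> T) :
  (forall l, l != i -> f l = g l) ->
  op (\big[op/idx]_l f l) (g i) = op (\big[op/idx]_l g l) (f i).
Proof.
move=> fg; rewrite (bigD1 i) // (bigD1 i (F := g)) //=.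
rewrite (eq_bigr g); last by move=> l /fg.
rewrite Monoid.mulmAC [RHS]Monoid.mulmAC; congr (op _ _); exact: Monoid.mulmC.
Qed.

Lemma prod_but1 (F : fieldType) (I : finType) (i : I) (f g : I -> F) :
  g i != 0 -> (forall l, l != i -> f l = g l) ->
  \prod_l f l = (\prod_l g l) * f i / g i.
Proof. by move=> gi_neq0 fg; rewrite -(@eq_big_but1 _ _ *%R _ i f g fg) mulfK. Qed.

Section DetailedBalance.
Variables (T : finType) (R : realFieldType) (S : pred T) (q : T -> T -> R).

Definition global_balance (p : T -> R) :=
  forall w, S w ->
  p w * \sum_(z | S z && (z != w)) q w z = \sum_(z | S z && (z != w)) p z * q z w.

Lemma detailed_balance_global (p : T -> R) :
  (forall w z, S w -> S z -> p w * q w z = p z * q z w) -> global_balance p.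
Proof. by move=> db w Sw; rewrite mulr_sumr; apply: eq_bigr => z /andP[Sz _]; apply: db. Qed.

Lemma dirichlet_formE (c : T -> T -> R) (h : T -> R) :
  (forall w z, S w -> S z -> c w z = c z w) ->
  \sum_(w | S w) \sum_(z | S z) c w z * (h w - h z) ^+ 2
  = 2 * \sum_(w | S w) h w * \sum_(z | S z) c w z * (h w - h z).
Proof.
move=> c_sym; set F := fun w z => c w z * (h w - h z).
have swap : \sum_(w | S w) \sum_(z | S z) F w z * h z
          = - \sum_(w | S w) \sum_(z | S z) F w z * h w.
  rewrite exchange_big -sumrN; apply: eq_bigr => z Sz.
  rewrite -sumrN; apply: eq_bigr => w Sw; rewrite /F c_sym //; ring.
have -> : \sum_(w | S w) \sum_(z | S z) c w z * (h w - h z) ^+ 2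
        = \sum_(w | S w) \sum_(z | S z) F w z * h w
          - \sum_(w | S w) \sum_(z | S z) F w z * h z.
  rewrite -sumrB; apply: eq_bigr => w _; rewrite -sumrB; apply: eq_bigr => z _.
  rewrite /F; ring.
rewrite swap opprK mulr_natl mulr2n; congr (_ + _);
  by apply: eq_bigr => w _; rewrite mulr_sumr; apply: eq_bigr => z _; rewrite mulrC.
Qed.

Definition positive_rate : rel T := [rel w z | [&& S w, S z & 0 < q w z]].

Variable g : T -> R.
Hypotheses (q_ge0 : forall w z, S w -> 0 <= q w z) (g_gt0 : forall w, S w -> 0 < g w)
  (g_balance : forall w z, S w -> S z -> g w * q w z = g z * q z w).

Lemma global_balance_harmonic (p : T -> R) : global_balance p ->
  forall w, S w -> \sum_(z | S z) g w * q w z * (p w / g w - p z / g z) = 0.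
Proof.
move=> bal w Sw; rewrite (bigD1 w) //= subrr mulr0 add0r.
have gw0 : g w != 0 by rewrite gt_eqF ?g_gt0.
rewrite (eq_bigr (fun z => p w * q w z - p z * q z w)) => [|z /andP[Sz _]].
  by rewrite sumrB -mulr_sumr bal // subrr.
have gz0 : g z != 0 by rewrite gt_eqF ?g_gt0.
by rewrite mulrBr [in X in _ - X]g_balance //; field; rewrite gz0 gw0.
Qed.

Lemma harmonic_positive_rate (h : T -> R) :
  (forall w, S w -> \sum_(z | S z) g w * q w z * (h w - h z) = 0) ->
  forall w z, positive_rate w z -> h w = h z.
Proof.
move=> harm.
have terms_ge0 w : S w -> forall z, S z -> 0 <= g w * q w z * (h w - h z) ^+ 2.
  move=> Sw z _; rewrite mulr_ge0 ?sqr_ge0 //.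
  exact: mulr_ge0 (ltW (g_gt0 Sw)) (q_ge0 z Sw).
have form0 : \sum_(w | S w) \sum_(z | S z) g w * q w z * (h w - h z) ^+ 2 = 0.
  rewrite (@dirichlet_formE (fun w z => g w * q w z)) => [|w z Sw Sz]; last exact: g_balance.
  by rewrite big1 ?mulr0 // => w Sw; rewrite harm ?mulr0.
move=> w z /and3P[Sw Sz qwz].
have row0 := psumr_eq0P (fun w Sw => sumr_ge0 _ (terms_ge0 w Sw)) form0 Sw.
have /eqP := psumr_eq0P (terms_ge0 w Sw) row0 Sz.
by rewrite mulf_eq0 sqrf_eq0 mulf_eq0 subr_eq0 (gt_eqF (g_gt0 Sw)) (gt_eqF qwz) => /eqP.
Qed.

Lemma global_balance_unique (w0 : T) (p : T -> R) :
  S w0 -> (forall w, S w -> connect positive_rate w w0) ->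
  global_balance p -> \sum_(w | S w) p w = 1 ->
  forall w, S w -> p w = (\sum_(w | S w) g w)^-1 * g w.
Proof.
move=> Sw0 conn bal p1.
have ratio_const w : S w -> p w / g w = p w0 / g w0.
  move=> Sw; apply/eqP; rewrite -[_ == _]/(w \in [pred x | p x / g x == p w0 / g w0]).
  rewrite (closed_connect _ (conn w Sw)) ?inE //.
  by move=> x y /(harmonic_positive_rate (global_balance_harmonic bal)) hxy; rewrite !inE hxy.
have pE w : S w -> p w = p w0 / g w0 * g w.
  by move=> Sw; rewrite -(ratio_const w) ?divfK ?gt_eqF ?g_gt0.
have sum_g : p w0 / g w0 * \sum_(w | S w) g w = 1.
  by rewrite -p1 mulr_sumr; apply: eq_bigr => w Sw; rewrite [RHS]pE.
have sum_neq0 : \sum_(w | S w) g w != 0.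
  by apply/eqP => sum0; move: sum_g; rewrite sum0 mulr0 => /eqP; rewrite eq_sym oner_eq0.
move=> w Sw; rewrite pE //; congr (_ * _).
by apply: (mulIf sum_neq0); rewrite sum_g mulVf.
Qed.

End DetailedBalance.

Lemma connect_descent (T : finType) (e : rel T) (S : pred T) (phi : T -> nat) (x0 : T) :
  (forall x, S x -> x != x0 -> exists y, [/\ S y, e x y & (phi y < phi x)%N]) ->
  forall x, S x -> connect e x x0.
Proof.
move=> step x; have [c] := ubnP (phi x); elim: c x => // c IH x phi_x Sx.
have [-> | x_ne] := eqVneq x x0; first exact: connect0.
have [y [Sy exy lt_yx]] := step x Sx x_ne.
exact: connect_trans (connect1 exy) (IH y (leq_trans lt_yx phi_x) Sy).
Qed.

Lemma ler_sum_term (R : numDomainType) (I : finType) (F : I -> R) (i : I) :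
  (forall l, 0 <= F l) -> F i <= \sum_l F l.
Proof. by move=> F_ge0; rewrite (bigD1 i) //= lerDl sumr_ge0. Qed.

Section Model.
Variables (m k n : nat) (R : realFieldType).
Variables (theta : nat -> R) (lambda mu : 'I_k -> R) (alpha beta u v : 'I_n -> R).

Local Notation state := (state m k n).
Local Notation wt := (weight theta lambda mu alpha beta u v).
Local Notation q := (rate theta lambda mu alpha beta u v).
Local Notation edge := (positive_rate (@inS m k n) q).

Lemma arrivalP i (w z : state) : arrival i w z ->
  [/\ z.1 i = (w.1 i).+1 :> nat, forall l, l != i -> z.1 l = w.1 l :> nat & z.2 = w.2].
Proof.
move=> /andP[/forallP xz /eqP z2]; split=> // [|l /negbTE l_ne].
  by have /eqP := xz i; rewrite eqxx addn1.
by have /eqP := xz l; rewrite l_ne addn0.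
Qed.

Lemma sum_arrival i (w z : state) : arrival i w z ->
  (\sum_l (z.1 l : nat) = (\sum_l (w.1 l : nat)).+1)%N.
Proof.
case/arrivalP=> zi zl _; apply: (@addIn (w.1 i)); rewrite addSnnS -zi.
exact: (@eq_big_but1 _ _ addn _ i (fun l => z.1 l : nat) (fun l => w.1 l : nat)).
Qed.

Lemma busy_arrival i (w z : state) : arrival i w z -> busy z = (busy w).+1.
Proof. by move=> wz; have [_ _ z2] := arrivalP wz; rewrite /busy (sum_arrival wz) z2. Qed.

Lemma act_moveP j (w z : state) : act_move j w z ->
  z.1 = w.1 /\ forall l, l != j -> z.2 l = w.2 l.
Proof.
by case/andP=> /eqP -> /forallP zl; split=> // l l_ne; have /implyP/(_ l_ne)/eqP := zl l.
Qed.

Lemma act_move_sym j (w z : state) : act_move j w z = act_move j z w.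
Proof.
rewrite /act_move eq_sym; congr (_ && _); apply: eq_forallb => l.
by rewrite [w.2 l == _]eq_sym.
Qed.

Lemma sum_act_move (f : act -> nat) j (w z : state) : act_move j w z ->
  (\sum_l f (z.2 l) + f (w.2 j) = \sum_l f (w.2 l) + f (z.2 j))%N.
Proof. by case/act_moveP=> _ zl; apply: (@eq_big_but1 _ _ addn _ j) => l /zl ->. Qed.

Lemma busy_act_move j (w z : state) : act_move j w z ->
  (busy z + (w.2 j == Trans) = busy w + (z.2 j == Trans))%N.
Proof.
move=> wz; have [z1 _] := act_moveP wz.
by rewrite /busy z1 -!addnA (sum_act_move (fun a => a == Trans : nat) wz).
Qed.

Definition theta_prod (b : nat) : R := \prod_(r < b) theta r.
Definition class_factor (i : 'I_k) (x : nat) : R := (lambda i / mu i) ^+ x / (x`!)%:R.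
Definition user_factor (j : 'I_n) (a : act) : R :=
  (if a == Wait then alpha j / beta j else 1)
  * (if a == Trans then (alpha j * u j) / (beta j * v j) else 1).

Lemma weightE (w : state) : wt w =
  theta_prod (busy w) * \prod_i class_factor i (w.1 i) * \prod_j user_factor j (w.2 j).
Proof. by []. Qed.

Lemma theta_prodS b : theta_prod b.+1 = theta_prod b * theta b.
Proof. exact: big_ord_recr. Qed.

Hypotheses (lambda_gt0 : forall i, 0 < lambda i) (mu_gt0 : forall i, 0 < mu i)
  (alpha_gt0 : forall j, 0 < alpha j) (beta_gt0 : forall j, 0 < beta j)
  (u_gt0 : forall j, 0 < u j) (v_gt0 : forall j, 0 < v j).

Let alpha_neq0 j : alpha j != 0. Proof. exact: lt0r_neq0 (alpha_gt0 j). Qed.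
Let beta_neq0 j : beta j != 0. Proof. exact: lt0r_neq0 (beta_gt0 j). Qed.
Let u_neq0 j : u j != 0. Proof. exact: lt0r_neq0 (u_gt0 j). Qed.
Let v_neq0 j : v j != 0. Proof. exact: lt0r_neq0 (v_gt0 j). Qed.

Lemma class_factor_gt0 i x : 0 < class_factor i x.
Proof. by rewrite divr_gt0 ?exprn_gt0 ?divr_gt0 ?ltr0n ?fact_gt0. Qed.

Lemma user_factor_gt0 j a : 0 < user_factor j a.
Proof. by rewrite mulr_gt0 //; case: ifP; rewrite ?divr_gt0 ?mulr_gt0. Qed.

Lemma class_factorS i x :
  class_factor i x.+1 = class_factor i x * lambda i / (x.+1%:R * mu i).
Proof.
rewrite /class_factor exprS factS natrM; field.
by rewrite (gt_eqF (mu_gt0 i)) nat1r !pnatr_eq0 -!lt0n fact_gt0.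
Qed.

Lemma weight_arrival i (w z : state) : arrival i w z ->
  wt w * (lambda i * theta (busy w)) = wt z * ((z.1 i)%:R * mu i).
Proof.
move=> wz; have [zi zl z2] := arrivalP wz.
have Xz := @prod_but1 _ _ i (fun l => class_factor l (z.1 l)) (fun l => class_factor l (w.1 l))
  (lt0r_neq0 (class_factor_gt0 _ _)) (fun l l_ne => congr1 _ (zl l l_ne)).
rewrite !weightE (busy_arrival wz) theta_prodS z2 Xz zi class_factorS; field.
by rewrite nat1r pnatr_eq0 (gt_eqF (mu_gt0 i)) (gt_eqF (class_factor_gt0 _ _)).
Qed.

Lemma weight_act_move j (w z : state) : act_move j w z ->
  wt w * act_rate theta alpha beta u v j w (w.2 j) (z.2 j)
  = wt z * act_rate theta alpha beta u v j z (z.2 j) (w.2 j).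
Proof.
move=> wz; have [z1 zl] := act_moveP wz; have busy_wz := busy_act_move wz.
have Yz := @prod_but1 _ _ j (fun l => user_factor l (z.2 l)) (fun l => user_factor l (w.2 l))
  (lt0r_neq0 (user_factor_gt0 _ _)) (fun l l_ne => congr1 _ (zl l l_ne)).
rewrite !weightE z1 Yz /act_rate; set Y := \prod_l _; rewrite /user_factor.
case: (w.2 j) (z.2 j) busy_wz => [] [] //=; rewrite ?mulr0 ?addn0 ?addn1 //;
  [move=> -> | move=> -> | move=> -> | move=> <-]; rewrite ?theta_prodS; field;
  by rewrite ?alpha_neq0 ?beta_neq0 ?u_neq0 ?v_neq0.
Qed.

Lemma weight_rate_balance (w z : state) : wt w * q w z = wt z * q z w.
Proof.
rewrite /rate !mulrDr !mulr_sumr; congr (_ + _); apply: eq_bigr => l _.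
- rewrite !mulrDr [RHS]addrC.
  by congr (_ + _); case: ifP => wz; rewrite ?mulr0 // (weight_arrival wz).
- rewrite [act_move l z w]act_move_sym.
  by case: ifP => wz; rewrite ?mulr0 // (weight_act_move wz).
Qed.

Definition arrival_rate i (w z : state) : R :=
  if arrival i w z then lambda i * theta (busy w) else 0.
Definition departure_rate i (w z : state) : R :=
  if arrival i z w then (w.1 i)%:R * mu i else 0.
Definition act_move_rate j (w z : state) : R :=
  if act_move j w z then act_rate theta alpha beta u v j w (w.2 j) (z.2 j) else 0.

Lemma rateE (w z : state) : q w z =
  \sum_i (arrival_rate i w z + departure_rate i w z) + \sum_j act_move_rate j w z.
Proof. by []. Qed.

Hypothesis theta_ge0 : forall b, (b <= m)%N -> 0 <= theta b.

Lemma rate_summands_ge0 (w z : state) : inS w ->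
  [/\ forall i, 0 <= arrival_rate i w z, forall i, 0 <= departure_rate i w z
    & forall j, 0 <= act_move_rate j w z].
Proof.
move=> Sw; have th := theta_ge0 Sw.
split=> l; rewrite /arrival_rate /departure_rate /act_move_rate; case: ifP => // _.
- exact: mulr_ge0 (ltW (lambda_gt0 l)) th.
- exact: mulr_ge0 (ler0n _ _) (ltW (mu_gt0 l)).
- by case: (w.2 l) (z.2 l) => [] [] //=; rewrite ?mulr_ge0 // ltW.
Qed.

Lemma rate_ge0 (w z : state) : inS w -> 0 <= q w z.
Proof.
case/(rate_summands_ge0 z)=> a_ge0 d_ge0 m_ge0.
by rewrite rateE addr_ge0 ?sumr_ge0 // => i _; rewrite addr_ge0.
Qed.

Lemma departure_rate_le i (w z : state) : inS w -> departure_rate i w z <= q w z.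
Proof.
case/(rate_summands_ge0 z)=> a_ge0 d_ge0 m_ge0.
rewrite rateE -[leLHS]addr0 lerD ?sumr_ge0 //.
apply: le_trans _ (ler_sum_term i (fun l => addr_ge0 (a_ge0 l) (d_ge0 l))).
by rewrite lerDr.
Qed.

Lemma act_move_rate_le j (w z : state) : inS w -> act_move_rate j w z <= q w z.
Proof.
case/(rate_summands_ge0 z)=> a_ge0 d_ge0 m_ge0.
rewrite rateE -[leLHS]add0r lerD ?(ler_sum_term j m_ge0) ?sumr_ge0 // => i _.
by rewrite addr_ge0.
Qed.

Definition height (w : state) : nat := (\sum_i w.1 i + \sum_j act_to_nat (w.2 j))%N.

Definition empty_state : state := ([ffun => ord0], [ffun => Idle]).

Definition depart (w : state) i : state :=
  ([ffun l => if l == i then inord (w.1 i).-1 else w.1 l], w.2).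

Definition act_down (a : act) : act := if a is Trans then Wait else Idle.

Definition step_down (w : state) j : state :=
  (w.1, [ffun l => if l == j then act_down (w.2 j) else w.2 l]).

Lemma arrival_depart (w : state) i : (0 < w.1 i)%N -> arrival i (depart w i) w.
Proof.
move=> xi_gt0; rewrite /arrival /depart /= eqxx andbT; apply/forallP => l; rewrite ffunE.
have [-> | _] := eqVneq l i; last by rewrite addn0.
by rewrite inordK ?addn1 ?prednK // ltnW.
Qed.

Lemma act_move_step_down (w : state) j : act_move j w (step_down w j).
Proof.
rewrite /act_move eqxx; apply/forallP => l; rewrite ffunE.
by apply/implyP => /negbTE ->.
Qed.

Lemma empty_stateP (w : state) :
  (forall i, w.1 i = 0 :> nat) -> (forall j, w.2 j = Idle) -> w = empty_state.
Proof.
case: w => x a /= x0 a0; congr pair; apply/ffunP => l; rewrite ffunE //.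
by apply: val_inj; rewrite /= x0.
Qed.

Hypothesis theta_gt0 : forall b, (b < m)%N -> 0 < theta b.

Lemma descent_step (w : state) : inS w -> w != empty_state ->
  exists z, [/\ inS z, edge w z & (height z < height w)%N].
Proof.
move=> Sw w_ne; have [i xi_gt0 | x0] := pickP (fun i => 0 < w.1 i)%N.
  have zw := arrival_depart xi_gt0; have [_ _ z2] := arrivalP zw.
  have Sz : inS (depart w i) by rewrite /inS ltnW // -(busy_arrival zw).
  exists (depart w i); split=> //.
    apply/and3P; split=> //; apply: lt_le_trans (departure_rate_le i _ Sw).
    by rewrite /departure_rate zw mulr_gt0 ?ltr0n.
  by rewrite /height (sum_arrival zw) z2 addSn.
have [j aj | a0] := pickP (fun j => w.2 j != Idle).
  have wz := act_move_step_down w j.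
  have zj : (step_down w j).2 j = act_down (w.2 j) by rewrite ffunE eqxx.
  have busy_wz := busy_act_move wz; have height_wz := sum_act_move act_to_nat wz.
  rewrite zj in busy_wz height_wz.
  have Sz : inS (step_down w j).
    by move: Sw busy_wz; rewrite /inS; case: (w.2 j) aj => //=; lia.
  exists (step_down w j); split=> //.
    apply/and3P; split=> //; apply: lt_le_trans (act_move_rate_le j _ Sw).
    by rewrite /act_move_rate wz zj; case: (w.2 j) aj => //=.
  by move: height_wz; rewrite /height /=; case: (w.2 j) aj => //=; lia.
case/eqP: w_ne; apply: empty_stateP => [i | j].
  by move: (x0 i) => /= /negbT; rewrite -eqn0Ngt => /eqP.
by move: (a0 j) => /= /negbFE /eqP.
Qed.

Lemma connect_empty_state (w : state) : inS w -> connect edge w empty_state.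
Proof. exact: (connect_descent (phi := height)) descent_step w. Qed.

Lemma inS_empty_state : inS empty_state.
Proof. by rewrite /inS /busy !big1 // => i _; rewrite ffunE. Qed.

Lemma weight_gt0 (w : state) : inS w -> 0 < wt w.
Proof.
move=> Sw; rewrite weightE !mulr_gt0 ?prodr_gt0 // => [r _ | i _ | j _].
- exact: theta_gt0 (leq_trans (ltn_ord r) Sw).
- exact: class_factor_gt0.
- exact: user_factor_gt0.
Qed.

Local Notation Z := (normconst m theta lambda mu alpha beta u v).

Lemma normconst_gt0 : 0 < Z.
Proof.
have S0 := inS_empty_state.
rewrite invr_gt0 (bigD1 empty_state) //= ltr_wpDr ?weight_gt0 //.
by rewrite sumr_ge0 // => w /andP[Sw _]; rewrite ltW ?weight_gt0.
Qed.

Section ScaledWeight.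
Variable p : state -> R.
Hypothesis pE : forall w, inS w -> p w = Z * wt w.

Lemma scaled_weight_pmf : is_pmf p.
Proof.
split=> [w Sw | ]; first by rewrite pE // mulr_ge0 ?ltW ?normconst_gt0 ?weight_gt0.
rewrite (eq_bigr (fun w => Z * wt w)) // -mulr_sumr mulVf //.
by rewrite -invr_eq0 gt_eqF ?normconst_gt0.
Qed.

Lemma scaled_weight_balance (w z : state) : inS w -> inS z -> p w * q w z = p z * q z w.
Proof. by move=> Sw Sz; rewrite !pE // -mulrA weight_rate_balance mulrA. Qed.

End ScaledWeight.

Lemma reversible_weight : reversible m theta lambda mu alpha beta u v.
Proof.
exists (fun w => Z * wt w).
by split; [apply: scaled_weight_pmf | apply: scaled_weight_balance].
Qed.

Lemma stationaryP (p : state -> R) :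
  stationary theta lambda mu alpha beta u v p <-> forall w, inS w -> p w = Z * wt w.
Proof.
split=> [[[_ p1] bal] | pE].
  by apply: (global_balance_unique rate_ge0 weight_gt0 (fun w z _ _ => weight_rate_balance w z)
    inS_empty_state connect_empty_state bal p1).
split; first exact: scaled_weight_pmf.
exact: detailed_balance_global (scaled_weight_balance pE).
Qed.

End Model.

Theorem theorem2 (m k n : nat) (R : realFieldType)
  (theta : nat -> R) (lambda mu : 'I_k -> R) (alpha beta u v : 'I_n -> R) :
  (0 < m)%N -> (0 < k)%N -> (0 < n)%N ->
  (forall i, 0 < lambda i) -> (forall i, 0 < mu i) ->
  (forall j, 0 < alpha j) -> (forall j, 0 < beta j) ->
  (forall j, 0 < u j) -> (forall j, 0 < v j) ->
  (forall b, (b <= m)%N -> 0 <= theta b <= 1) ->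
  (forall b, (b < m)%N -> 0 < theta b) ->
  theta m = 0 ->
  reversible m theta lambda mu alpha beta u v /\
  (forall p : state m k n -> R,
     stationary theta lambda mu alpha beta u v p <->
     (forall w, inS w ->
        p w = normconst m theta lambda mu alpha beta u v
              * weight theta lambda mu alpha beta u v w)).
Proof.
(* [theta m = 0] only forbids leaving S, which the rates restricted to S never do. *)
move=> _ _ _ lambda_gt0 mu_gt0 alpha_gt0 beta_gt0 u_gt0 v_gt0 theta01 theta_gt0 _.
have theta_ge0 b : (b <= m)%N -> 0 <= theta b by case/theta01/andP.
split; first exact: reversible_weight.
by move=> p; apply: stationaryP.
Qed.
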